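(* Let $n \ge 1$ and $k \in \{1, \ldots, n\}$, with red tanks $R_1, \ldots, R_n$ each initially containing $1$ unit and blue tanks $B_1, \ldots, B_n$ initially empty. After running the moving window strategy (for $i = 1, \ldots, n-k+1$ in order, for $j = i, \ldots, i+k-1$ in order, equilibrate $R_i$ and $B_j$), the total amount of water in the red tanks is at most \[ \frac{n-k+1}{k+1} + (k-1). \] In particular, for $k = \lfloor \sqrt{n+2} \rfloor$ this total is strictly less than $2\sqrt{n}$.
   Context: Equilibrating two tanks $a \neq b$ with water levels $x_a, x_b$ replaces both levels by $\frac{x_a+x_b}{2}$ and leaves all other tanks unchanged. *)

From HB Require Import structures.
From mathcomp Require Import all_boot all_order all_algebra.
From mathcomp Require Import reals.
Set Implicit Arguments. Unset Strict Implicit. Unset Printing Implicit Defensive.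
Import Order.TTheory GRing.Theory Num.Theory.
Local Open Scope ring_scope.

(* A state: (water levels of red tanks, water levels of blue tanks),
   tanks indexed by natural numbers (tanks 1..n are the relevant ones). *)
Definition tstate (R : realType) := ((nat -> R) * (nat -> R))%type.

Definition equil (R : realType) (s : tstate R) (i j : nat) : tstate R :=
  let m := (s.1 i + s.2 j) / 2 in
  (fun x => if x == i then m else s.1 x, fun x => if x == j then m else s.2 x).

Definition init_state (R : realType) (n : nat) : tstate R :=
  (fun x => if (1 <= x <= n)%N then 1 else 0, fun _ => 0).

Definition moving_window (R : realType) (n k : nat) : tstate R :=
  foldl (fun s i => foldl (fun s' j => equil s' i j) s (iota i k))
        (init_state R n) (iota 1 (n - k + 1)).

Definition red_total (R : realType) (n k : nat) : R :=
  \sum_(1 <= i < n.+1) (moving_window R n k).1 i.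

From HB Require Import structures.
From mathcomp Require Import all_boot all_order all_algebra.
From mathcomp Require Import reals.
From mathcomp Require Import ring lra zify.
Set Implicit Arguments.
Unset Strict Implicit.
Unset Printing Implicit Defensive.

Import Order.TTheory GRing.Theory Num.Theory.
Local Open Scope ring_scope.

(* Scale all levels by K = k+1.  While red tank R_i sweeps its window, the
   t-th equilibration meets a red level at most (K - t)/K and a blue level at
   most (k - t - 1)/K, so both end at most (k - t)/K: R_i leaves with at most
   1/K, and every blue tank of the window is one step 1/K fuller than before.
   Hence when R_(i+1) starts, B_(i+1+u) holds at most (k - u - 1)/K, the same
   profile R_i met, and the invariant propagates.  The n-k+1 swept red tanks
   contribute at most (n-k+1)/K, the k-1 untouched ones k-1.  For
   k = floor (sqrt (n+2)) this is (n + k^2 - k)/(k+1) < 2 sqrt n. *)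

Lemma foldl_iota_ind (S : Type) (f : S -> nat -> S) (P : nat -> S -> Prop)
    (a m : nat) (s0 : S) :
  P 0%N s0 -> (forall t s, (t < m)%N -> P t s -> P t.+1 (f s (a + t)%N)) ->
  P m (foldl f s0 (iota a m)).
Proof.
move=> P0; elim: m => [|m IHm] PS //.
rewrite -addn1 iotaD foldl_cat /= addn1.
by apply: (PS) => //; apply: IHm => t s ltm; apply: PS; lia.
Qed.

Definition window (R : realType) (k i : nat) (s : tstate R) : tstate R :=
  foldl (fun s' j => equil s' i j) s (iota i k).

Lemma moving_windowE (R : realType) (n k : nat) :
  moving_window R n k =
  foldl (fun s i => window k i s) (init_state R n) (iota 1 (n - k + 1)).
Proof. by []. Qed.

Section Window.
Variables (R : realType) (k : nat).
Let K : R := k.+1%:R.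

Lemma window_red_other (s : tstate R) (i x : nat) :
  x != i -> (window k i s).1 x = s.1 x.
Proof.
move=> neq_xi; rewrite /window; elim: (iota i k) s => //= j js IHjs s.
by rewrite IHjs /= (negbTE neq_xi).
Qed.

Lemma window_blue_out (s : tstate R) (i j : nat) :
  ~~ (i <= j < i + k)%N -> (window k i s).2 j = s.2 j.
Proof.
rewrite /window -mem_iota; elim: (iota i k) s => //= j' js IHjs s.
by rewrite inE negb_or => /andP[neq_jj' /IHjs ->] /=; rewrite (negbTE neq_jj').
Qed.

Lemma window_bounds (s : tstate R) (i : nat) :
  s.1 i <= 1 ->
  (forall u, (u < k)%N -> s.2 (i + u)%N * K + u.+1%:R <= k%:R) ->
  (window k i s).1 i * K <= 1 /\
  (forall u, (u < k)%N -> (window k i s).2 (i + u)%N * K + u%:R <= k%:R).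
Proof.
move=> red_le1 blue_le.
have K_def : K = k%:R + 1 by rewrite /K -addn1 natrD.
suff [red_le [blue_done _]] :
    (window k i s).1 i * K + k%:R <= K /\
    (forall u, (u < k)%N -> (window k i s).2 (i + u)%N * K + u%:R <= k%:R) /\
    (forall u, (k <= u)%N -> (window k i s).2 (i + u)%N = s.2 (i + u)%N).
  by split=> //; lra.
apply: (@foldl_iota_ind _ _ (fun t s' =>
  s'.1 i * K + t%:R <= K /\
  (forall u, (u < t)%N -> s'.2 (i + u)%N * K + u%:R <= k%:R) /\
  (forall u, (t <= u)%N -> s'.2 (i + u)%N = s.2 (i + u)%N))).
  by split; [rewrite addr0 -[leRHS]mul1r ler_wpM2r | split].
move=> t s' ltk [red_t [done_t pending_t]].
have blue_t := blue_le t ltk; rewrite -(pending_t t) // in blue_t.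
have mean_le : (s'.1 i + s'.2 (i + t)%N) / 2 * K + t%:R <= k%:R.
  have -> : (s'.1 i + s'.2 (i + t)%N) / 2 * K =
            (s'.1 i * K + s'.2 (i + t)%N * K) / 2 by ring.
  move: red_t blue_t; rewrite -natr1 K_def; lra.
rewrite /equil /=; split; last split.
- by move: mean_le; rewrite eqxx -natr1 K_def; lra.
- move=> u ltu; case: (ltngtP u t) => [ltut||->]; last by rewrite eqxx.
  + by rewrite ifN ?done_t //; apply/eqP; lia.
  + lia.
- by move=> u leu; rewrite ifN ?pending_t //; [lia | apply/eqP; lia].
Qed.

End Window.

Section MovingWindow.
Variables (R : realType) (n k : nat).
Hypotheses (k_gt0 : (0 < k)%N) (k_le_n : (k <= n)%N).
Let K : R := k.+1%:R.

(* The windows of R_1, ..., R_t have been swept; R_(t+1) comes next. *)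
Definition sweep_invariant (t : nat) (s : tstate R) :=
  [/\ forall x, (t < x)%N -> s.1 x = (init_state R n).1 x,
      forall x, (0 < x <= t)%N -> s.1 x * K <= 1,
      forall u, (u < k)%N -> s.2 (t.+1 + u)%N * K + u.+1%:R <= k%:R
    & forall j, (t + k <= j)%N -> s.2 j = 0].

Lemma sweep_invariant_moving_window :
  sweep_invariant (n - k + 1) (moving_window R n k).
Proof.
rewrite moving_windowE; apply: foldl_iota_ind.
  split=> // [x|u ltu]; first lia.
  by rewrite mul0r add0r ler_nat.
move=> t s ltt [red_init red_le blue_le blue0]; rewrite add1n.
have red_le1 : s.1 t.+1 <= 1 by rewrite red_init // /init_state /=; case: ifP.
have [red_win blue_win] := window_bounds red_le1 blue_le.
split.
- move=> x ltx; rewrite window_red_other ?red_init //; [lia | apply/eqP; lia].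
- move=> x /andP[x_gt0]; rewrite leq_eqVlt => /orP[/eqP -> // | ltx].
  by rewrite window_red_other ?red_le ?x_gt0 //; apply/eqP; lia.
- move=> u ltu; have [ltuk | eq_uk] := ltnP u.+1 k.
    by rewrite addSnnS; apply: blue_win.
  rewrite window_blue_out ?blue0 ?mul0r ?add0r ?ler_nat //; lia.
- by move=> j lej; rewrite window_blue_out ?blue0 //; lia.
Qed.

Lemma red_total_le :
  red_total R n k <= (n - k + 1)%:R / (k + 1)%:R + (k - 1)%:R.
Proof.
rewrite [(k + 1)%N]addn1 -/K.
have [red_init red_le _ _] := sweep_invariant_moving_window.
rewrite /red_total (big_cat_nat _ (n := (n - k + 2)%N)) /=; [|lia|lia].
apply: lerD.
- apply: le_trans (_ : \sum_(1 <= i < n - k + 2) K^-1 <= _).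
    rewrite !big_nat; apply: ler_sum => x x_in.
    by rewrite -div1r ler_pdivlMr ?ltr0Sn // red_le //; lia.
  rewrite sumr_const_nat mulrC mulr_natr.
  by rewrite (_ : n - k + 2 - 1 = n - k + 1)%N //; lia.
- have -> : \sum_(n - k + 2 <= i < n.+1) (moving_window R n k).1 i =
            \sum_(n - k + 2 <= i < n.+1) (1 : R).
    rewrite !big_nat; apply: eq_bigr => x x_in.
    by rewrite red_init /init_state /=; [case: ifP => //; lia | lia].
  by rewrite sumr_const_nat (_ : n.+1 - (n - k + 2) = k - 1)%N ?lexx //; lia.
Qed.

End MovingWindow.

Lemma floor_sqrt_natE (R : realType) (m k : nat) :
  (k : int) = Num.floor (Num.sqrt (m%:R : R)) ->
  (k * k <= m < k.+1 * k.+1)%N.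
Proof.
move=> /esym /eqP; rewrite floor_eq intrD !pmulrn => /andP[k_le lt_k1].
have m_sqr : Num.sqrt (m%:R : R) ^+ 2 = m%:R by rewrite sqr_sqrtr ?ler0n.
have k_ge0 : (0 : R) <= k%:R by [].
rewrite -(ler_nat R) -(ltr_nat R) !natrM -natr1 -m_sqr expr2.
by apply/andP; split; nra.
Qed.

Lemma ltr_two_sqrt (R : rcfType) (b x : R) :
  0 <= x -> b ^+ 2 < 4 * x -> b < 2 * Num.sqrt x.
Proof.
move=> x_ge0; have := sqrtr_ge0 x; have := sqr_sqrtr x_ge0.
move: (Num.sqrt x) => q; rewrite !expr2 => <- q_ge0 lt_b; nra.
Qed.

Theorem mainTheorem6 (R : realType) (n k : nat) (hn : (1 <= n)%N)
    (hk1 : (1 <= k)%N) (hkn : (k <= n)%N) :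
  red_total R n k <= (n - k + 1)%:R / (k + 1)%:R + (k - 1)%:R
  /\ ((k : int) = Num.floor (Num.sqrt ((n + 2)%:R : R)) ->
      red_total R n k < 2 * Num.sqrt (n%:R : R)).
Proof.
have red_le := red_total_le R hk1 hkn.
split=> // /floor_sqrt_natE /andP[k_sqr_le lt_k1_sqr].
apply: (le_lt_trans red_le); apply: ltr_two_sqrt => //.
set B := _ + _; have K_gt0 : 0 < (k + 1)%:R :> R by rewrite ltr0n addn1.
have scaled : B * (k + 1)%:R = (n + k * k - k)%:R.
  by rewrite mulrDl divfK ?gt_eqF // -natrM -natrD; congr (_%:R); nia.
rewrite -(ltr_pM2r (exprn_gt0 2 K_gt0)) -exprMn scaled -mulrA -!natrX -!natrM.
rewrite ltr_nat; nia.
Qed.
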